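(* Let $m$ be a real parameter and let $D:[0,\infty)\times\mathbb N\to\mathbb R$ be functions such that, with the operators $\mathcal K^\alpha$ acting on the variable $z$, $\mathcal K^+_lD(z,n)=(\tfrac m2+n)D(z,n+1)$ and $\mathcal K^0_lD(z,n)=(n+\tfrac m4)D(z,n)$ for all $n\in\mathbb N$, and $\mathcal K^-_lD(z,0)=0$. Then $\mathcal K^\alpha\rightarrow^DK^\alpha$ for each $\alpha\in\{+,-,0\}$.
   Context: $\mathbb N=\{0,1,2,\dots\}$. On smooth functions $f:[0,\infty)\to\mathbb R$: $\mathcal K^+f(z)=zf(z)$, $\mathcal K^-f(z)=zf''(z)+\frac m2f'(z)$, $\mathcal K^0f(z)=zf'(z)+\frac m4f(z)$. On functions $f:\mathbb N\to\mathbb R$: $K^+f(n)=(\frac m2+n)f(n+1)$, $K^-f(n)=nf(n-1)$, $K^0f(n)=(\frac m4+n)f(n)$. Left/right actions: $(\mathcal K_lD)(z,n)=(\mathcal KD(\cdot,n))(z)$, $(K_rD)(z,n)=(KD(z,\cdot))(n)$; $\mathcal K\rightarrow^DK$ means $\mathcal K_lD=K_rD$. *)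

From Stdlib Require Import Reals.
From Coquelicot Require Import Coquelicot.
Open Scope R_scope.

(* A smooth function on [0,oo) is modelled as the restriction of a smooth
   function on R; all identities are only required/claimed for z >= 0. *)
Definition smooth (f : R -> R) : Prop :=
  forall (k : nat) (x : R), ex_derive_n f k x.

Definition cK_plus (f : R -> R) (z : R) : R := z * f z.
Definition cK_minus (m : R) (f : R -> R) (z : R) : R :=
  z * Derive_n f 2 z + m / 2 * Derive f z.
Definition cK_zero (m : R) (f : R -> R) (z : R) : R :=
  z * Derive f z + m / 4 * f z.

Definition dK_plus (m : R) (g : nat -> R) (n : nat) : R := (m / 2 + INR n) * g (S n).
Definition dK_minus (g : nat -> R) (n : nat) : R := INR n * g (Nat.pred n).
  (* for n = 0 this is 0 * g 0 = 0 *)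
Definition dK_zero (m : R) (g : nat -> R) (n : nat) : R := (m / 4 + INR n) * g n.

Definition left_act (cK : (R -> R) -> R -> R) (D : R -> nat -> R) (z : R) (n : nat) : R :=
  cK (fun z' => D z' n) z.
Definition right_act (K : (nat -> R) -> nat -> R) (D : R -> nat -> R) (z : R) (n : nat) : R :=
  K (fun n' => D z n') n.

Definition intertwines (cK : (R -> R) -> R -> R) (D : R -> nat -> R)
    (K : (nat -> R) -> nat -> R) : Prop :=
  forall (z : R) (n : nat), 0 <= z -> left_act cK D z n = right_act K D z n.

(* Only the lowering operator needs work, at [n = k + 1]. The [K^0] relation says
   [z D_{k+1}' = (k+1) D_{k+1}]; differentiating gives [z D_{k+1}'' = k D_{k+1}'].
   Multiplied by [z], the wanted identity [z D_{k+1}'' + m/2 D_{k+1}' = (k+1) D_k]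
   becomes [(k + m/2)(k+1) D_{k+1} = (k+1) z D_k], which is the [K^+] relation.
   This settles [z > 0]; [z = 0] follows by continuity. *)
From Stdlib Require Import Reals Lra.
From Coquelicot Require Import Coquelicot.
Open Scope R_scope.

Lemma continuous_eq0_from_right (h : R -> R) :
  continuous h 0 -> (forall y, 0 < y -> h y = 0) -> h 0 = 0.
Proof.
  intros Hc Hpos.
  apply (filterlim_locally_unique (F := at_right 0) h).
  - apply (filterlim_filter_le_1 (F := locally 0)); [|exact Hc].
    intros P [eps Heps]. exists eps. intros y Hy _. now apply Heps.
  - apply (filterlim_ext_loc (fun _ => 0)); [|apply filterlim_const].
    exists (mkposreal 1 Rlt_0_1). intros y _ Hy. symmetry. now apply Hpos.
Qed.

Lemma Euler_Derive2 (c : R) (f : R -> R) (y : R) :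
  0 < y -> ex_derive (Derive f) y ->
  (forall t, 0 < t -> t * Derive f t = c * f t) ->
  y * Derive_n f 2 y = (c - 1) * Derive f y.
Proof.
  intros Hy Hf2 Heuler.
  assert (Hderiv : Derive (fun t => t * Derive f t) y = Derive (fun t => c * f t) y).
  { apply Derive_ext_loc. exists (mkposreal y Hy). intros t Ht.
    apply Heuler. apply Rabs_lt_between' in Ht. simpl in Ht. lra. }
  rewrite Derive_mult, Derive_scal, Derive_id in Hderiv.
  - change (Derive_n f 2 y) with (Derive (Derive f) y). unfold id in Hderiv. lra.
  - apply ex_derive_id.
  - exact Hf2.
Qed.

Lemma cK_minus_lowering (m c : R) (d e : R -> R) :
  smooth d -> smooth e ->
  (forall y, 0 <= y -> y * Derive d y = c * d y) ->
  (forall y, 0 <= y -> y * e y = (m / 2 + c - 1) * d y) ->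
  forall z, 0 <= z -> cK_minus m d z = c * e z.
Proof.
  intros Hd He Heuler Hraise.
  set (h := fun y => cK_minus m d y - c * e y).
  assert (Hpos : forall y, 0 < y -> h y = 0).
  { intros y Hy.
    pose proof (Euler_Derive2 c d y Hy (Hd 2%nat y)
                  (fun t Ht => Heuler t (Rlt_le _ _ Ht))) as Hd2.
    assert (Hd2y : y * (y * Derive_n d 2 y) = (c - 1) * (y * Derive d y))
      by (rewrite Hd2; ring).
    apply (Rmult_eq_reg_l y); [|lra].
    transitivity (m / 2 * (y * Derive d y) + (c - 1) * (y * Derive d y) - c * (y * e y)).
    - unfold h, cK_minus. rewrite <- Hd2y. ring.
    - rewrite Heuler, Hraise by lra. ring. }
  intros z [Hz|<-]; [apply (Rminus_diag_uniq _ _ (Hpos z Hz))|].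
  apply Rminus_diag_uniq, (continuous_eq0_from_right h); [|exact Hpos].
  apply (ex_derive_continuous (K := R_AbsRing) (V := R_NormedModule)).
  unfold h, cK_minus.
  auto_derive. repeat split; [apply (Hd 3%nat) | apply (Hd 2%nat) | apply (He 1%nat)].
Qed.

Theorem proposition5p1 (m : R) (D : R -> nat -> R)
  (Hsmooth : forall n : nat, smooth (fun z => D z n))
  (Hplus : forall (z : R) (n : nat), 0 <= z ->
     left_act cK_plus D z n = (m / 2 + INR n) * D z (S n))
  (Hzero : forall (z : R) (n : nat), 0 <= z ->
     left_act (cK_zero m) D z n = (INR n + m / 4) * D z n)
  (Hminus0 : forall z : R, 0 <= z -> left_act (cK_minus m) D z 0 = 0) :
  intertwines cK_plus D (dK_plus m) /\
  intertwines (cK_minus m) D dK_minus /\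
  intertwines (cK_zero m) D (dK_zero m).
Proof.
  split; [|split]; intros z n Hz.
  - now rewrite Hplus.
  - unfold right_act, dK_minus. destruct n as [|k].
    + rewrite Hminus0 by exact Hz. simpl. ring.
    + unfold left_act. simpl Nat.pred.
      apply (cK_minus_lowering m (INR (S k)) _ (fun y => D y k));
        [apply Hsmooth | apply Hsmooth | | | exact Hz].
      * intros y Hy. specialize (Hzero y (S k) Hy).
        unfold left_act, cK_zero in Hzero. lra.
      * intros y Hy. rewrite S_INR.
        replace (m / 2 + (INR k + 1) - 1) with (m / 2 + INR k) by ring.
        exact (Hplus y k Hy).
  - unfold right_act, dK_zero. rewrite Hzero by exact Hz. ring.
Qed.
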